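(* Let $\Omega\subset\mathbb{R}^N$ be a bounded open connected set, $F:\Omega\times\mathbb{R}\times\mathcal{S}(N)\to\mathbb{R}$ continuous with $\{(r,A):F(x,r,A)=0\}\neq\emptyset$ for each $x$, and $\Phi$ a proper elliptic map on $\Omega$ such that $F(x,r+s,A+P)\ge F(x,r,A)$ for all $x\in\Omega$, $(r,A)\in\Phi(x)$, $(s,P)\in\mathcal{Q}$. Let $\Theta(x):=\{(r,A)\in\Phi(x):F(x,r,A)\ge0\}$ and suppose $\Theta$ is a proper elliptic map. Then: (a) $u\in\mathrm{USC}(\Omega)$ is a $\Phi$-admissible viscosity subsolution of $F(x,u,D^2u)=0$ in $\Omega$ if and only if $u$ is $\Theta$-subharmonic in $\Omega$. (b) Provided that $F(x,r,A)>0$ for each $x\in\Omega$ and each $(r,A)\in(\Theta(x))^\circ$, a function $u\in\mathrm{LSC}(\Omega)$ is a $\Phi$-admissible viscosity supersolution of $F(x,u,D^2u)=0$ in $\Omega$ if and only if $u$ is $\Theta$-superharmonic in $\Omega$ (equivalently, $-u$ is $\tilde\Theta$-subharmonic in $\Omega$).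
   Context: $\mathcal{S}(N)$: real symmetric $N\times N$ matrices. $\mathcal{Q}:=\{(s,P): s\le0,\ P\ge0\}$. A proper elliptic map assigns to each $x\in\Omega$ a closed, nonempty set $\subsetneq\mathbb{R}\times\mathcal{S}(N)$ invariant under adding $\mathcal Q$. Dual map: $\tilde\Theta(x):=-\big[(\mathbb{R}\times\mathcal{S}(N))\setminus(\Theta(x))^\circ\big]$. $J^+_{x_0}u:=\{(\varphi(x_0),D^2\varphi(x_0)):\varphi$ is $C^2$ near $x_0$, $u\le\varphi$ near $x_0$, $u(x_0)=\varphi(x_0)\}$, $J^-_{x_0}u$ likewise with $u\ge\varphi$. $u\in\mathrm{USC}(\Omega)$ is $\Theta$-subharmonic if $J^+_{x_0}u\subset\Theta(x_0)$ for all $x_0$; $u\in\mathrm{LSC}(\Omega)$ is $\Theta$-superharmonic if $J^-_{x_0}u\subset(\mathbb{R}\times\mathcal{S}(N))\setminus(\Theta(x_0))^\circ$ for all $x_0$. $u\in\mathrm{USC}(\Omega)$ is a $\Phi$-admissible viscosity subsolution if for every $x_0\in\Omega$ and $(r,A)\in J^+_{x_0}u$: $F(x_0,r,A)\ge0$ and $(r,A)\in\Phi(x_0)$. $u\in\mathrm{LSC}(\Omega)$ is a $\Phi$-admissible viscosity supersolution if for every $x_0$ and $(r,A)\in J^-_{x_0}u$: $F(x_0,r,A)\le0$ or $(r,A)\notin(\Phi(x_0))^\circ$. *)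

From HB Require Import structures.
From mathcomp Require Import all_boot all_order all_algebra.
From mathcomp Require Import all_classical all_reals all_analysis.
Import Order.TTheory GRing.Theory Num.Theory.
Import numFieldNormedType.Exports.

Set Implicit Arguments.
Unset Strict Implicit.
Unset Printing Implicit Defensive.

Local Open Scope ring_scope.
Local Open Scope classical_set_scope.

Section ViscosityDefs.
Context {R : realType} {N : nat}.

Definition symmetric_mx (A : 'M[R]_N) : Prop := A^T = A.

Definition psd (P : 'M[R]_N) : Prop :=
  symmetric_mx P /\ forall v : 'rV[R]_N, 0 <= (v *m P *m v^T) 0 0.

Definition RxS : set (R * 'M[R]_N) := [set p | symmetric_mx p.2].

Definition jet_close (p q : R * 'M[R]_N) (e : R) : Prop :=
  `|p.1 - q.1| < e /\ forall i j, `|p.2 i j - q.2 i j| < e.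

Definition jet_interior (S : set (R * 'M[R]_N)) : set (R * 'M[R]_N) :=
  [set p | symmetric_mx p.2 /\
     exists2 e : R, 0 < e & forall q, symmetric_mx q.2 -> jet_close p q e -> S q].

Definition jet_closed (S : set (R * 'M[R]_N)) : Prop :=
  forall p, symmetric_mx p.2 ->
    (forall e : R, 0 < e -> exists q, S q /\ jet_close p q e) -> S p.

Definition proper_elliptic (Omega : set 'rV[R]_N)
    (Theta : 'rV[R]_N -> set (R * 'M[R]_N)) : Prop :=
  forall x, Omega x ->
    [/\ Theta x `<=` RxS,
        jet_closed (Theta x),
        exists p, Theta x p,
        exists p, RxS p /\ ~ Theta x p
      & forall r A s P, Theta x (r, A) -> s <= 0 -> psd P ->
          Theta x (r + s, A + P)].

Definition dual_map (Theta : 'rV[R]_N -> set (R * 'M[R]_N)) :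
    'rV[R]_N -> set (R * 'M[R]_N) :=
  fun x => [set p | RxS (- p.1, - p.2) /\ ~ jet_interior (Theta x) (- p.1, - p.2)].

Definition unitv (i : 'I_N) : 'rV[R]_N := delta_mx 0 i.

Definition partial (i : 'I_N) (f : 'rV[R]_N -> R) : 'rV[R]_N -> R :=
  fun x => derive f x (unitv i).

Definition C2_near (phi : 'rV[R]_N -> R) (x0 : 'rV[R]_N) : Prop :=
  exists U : set 'rV[R]_N, [/\ open U, U x0 &
    forall x, U x ->
      [/\ {for x, continuous phi},
          forall i, derivable phi x (unitv i),
          forall i, {for x, continuous (partial i phi)},
          forall i j, derivable (partial i phi) x (unitv j)
        & forall i j, {for x, continuous (partial j (partial i phi))}]].

Definition hessian (phi : 'rV[R]_N -> R) (x : 'rV[R]_N) : 'M[R]_N :=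
  \matrix_(i, j) partial i (partial j phi) x.

Definition usc_on (Omega : set 'rV[R]_N) (u : 'rV[R]_N -> \bar R) : Prop :=
  forall x, Omega x ->
    (u x != +oo)%E /\
    forall c : R, (u x < c%:E)%E -> \forall y \near x, (u y < c%:E)%E.

Definition lsc_on (Omega : set 'rV[R]_N) (u : 'rV[R]_N -> \bar R) : Prop :=
  forall x, Omega x ->
    (u x != -oo)%E /\
    forall c : R, (c%:E < u x)%E -> \forall y \near x, (c%:E < u y)%E.

Definition jet_plus (u : 'rV[R]_N -> \bar R) (x0 : 'rV[R]_N) : set (R * 'M[R]_N) :=
  [set p | exists phi, [/\ C2_near phi x0,
      (\forall y \near x0, (u y <= (phi y)%:E)%E),
      u x0 = (phi x0)%:E
    & p = (phi x0, hessian phi x0)]].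

Definition jet_minus (u : 'rV[R]_N -> \bar R) (x0 : 'rV[R]_N) : set (R * 'M[R]_N) :=
  [set p | exists phi, [/\ C2_near phi x0,
      (\forall y \near x0, ((phi y)%:E <= u y)%E),
      u x0 = (phi x0)%:E
    & p = (phi x0, hessian phi x0)]].

Definition subharmonic (Omega : set 'rV[R]_N) (Theta : 'rV[R]_N -> set (R * 'M[R]_N))
    (u : 'rV[R]_N -> \bar R) : Prop :=
  forall x0, Omega x0 -> jet_plus u x0 `<=` Theta x0.

Definition superharmonic (Omega : set 'rV[R]_N) (Theta : 'rV[R]_N -> set (R * 'M[R]_N))
    (u : 'rV[R]_N -> \bar R) : Prop :=
  forall x0, Omega x0 ->
    jet_minus u x0 `<=` [set p | RxS p /\ ~ jet_interior (Theta x0) p].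

Definition adm_subsolution (Omega : set 'rV[R]_N) (F : 'rV[R]_N -> R -> 'M[R]_N -> R)
    (Phi : 'rV[R]_N -> set (R * 'M[R]_N)) (u : 'rV[R]_N -> \bar R) : Prop :=
  forall x0, Omega x0 -> forall r A, jet_plus u x0 (r, A) ->
    0 <= F x0 r A /\ Phi x0 (r, A).

Definition adm_supersolution (Omega : set 'rV[R]_N) (F : 'rV[R]_N -> R -> 'M[R]_N -> R)
    (Phi : 'rV[R]_N -> set (R * 'M[R]_N)) (u : 'rV[R]_N -> \bar R) : Prop :=
  forall x0, Omega x0 -> forall r A, jet_minus u x0 (r, A) ->
    F x0 r A <= 0 \/ ~ jet_interior (Phi x0) (r, A).

Definition Theta_of (F : 'rV[R]_N -> R -> 'M[R]_N -> R)
    (Phi : 'rV[R]_N -> set (R * 'M[R]_N)) : 'rV[R]_N -> set (R * 'M[R]_N) :=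
  fun x => [set p | Phi x p /\ 0 <= F x p.1 p.2].

Definition F_continuous (Omega : set 'rV[R]_N) (F : 'rV[R]_N -> R -> 'M[R]_N -> R) : Prop :=
  {within [set p : 'rV[R]_N * R * 'M[R]_N | Omega p.1.1 /\ symmetric_mx p.2],
     continuous (fun p : 'rV[R]_N * R * 'M[R]_N => F p.1.1 p.1.2 p.2)}.

End ViscosityDefs.

From HB Require Import structures.
From mathcomp Require Import all_boot all_order all_algebra.
From mathcomp Require Import all_classical all_reals all_analysis.
Import Order.TTheory GRing.Theory Num.Theory.
Import numFieldNormedType.Exports.
Local Open Scope ring_scope.
Local Open Scope classical_set_scope.

(* Part (a) unfolds the definitions jet by jet.  For (b), a subjet (r, A) of
   u is the 2-jet of a C^2 test function, so A is symmetric by Schwarz's theorem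
   (obtained from the mean value theorem applied twice to a second difference).
   By continuity of F, an interior point of Phi(x) where F > 0 is interior to
   Theta(x), while F > 0 on the interior of Theta(x) by hypothesis; hence
   "F <= 0 or (r, A) is not interior to Phi(x)" says exactly that (r, A) is not
   interior to Theta(x).  The dual formulation follows from J^+(-u) = -J^-(u). *)

Section MixedDerivatives.
Context {R : realType} {V : normedModType R}.
Implicit Types (f : V -> R) (x e d v : V).

Lemma is_derive_line {f x v} {s : R} : derivable f (x + s *: v) v ->
  is_derive s 1 (fun s => f (x + s *: v)) ('D_v f (x + s *: v)).
Proof.
move=> dfv.
have quotE : (fun h : R => h^-1 *: (((fun s => f (x + s *: v)) \o shift s) (h *: 1)
                                      - f (x + s *: v)))
    = (fun h => h^-1 *: ((f \o shift (x + s *: v)) (h *: v) - f (x + s *: v))).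
  apply: funext => h /=; congr (_ *: (f _ - _)).
  by rewrite [_%:A]mulr1 scalerDl addrCA.
apply: DeriveDef; first by rewrite /derivable quotE.
by rewrite /derive quotE.
Qed.

Lemma MVT_line f x v {a b : R} : a < b ->
  (forall s, a <= s <= b -> derivable f (x + s *: v) v) ->
  exists2 c, a < c < b &
    f (x + b *: v) - f (x + a *: v) = 'D_v f (x + c *: v) * (b - a).
Proof.
move=> ab df.
have df' c : c \in `]a, b[%R ->
    is_derive c 1 (fun s => f (x + s *: v)) ('D_v f (x + c *: v)).
  by rewrite in_itv /= => /andP[ac cb]; apply/is_derive_line/df; rewrite !ltW.
have cf : {within `[a, b], continuous (fun s => f (x + s *: v))}.
  apply: derivable_within_continuous => s; rewrite in_itv /= => sab.
  by case: (is_derive_line (df s sab)).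
have [c cab ->] := MVT ab df' cf.
by exists c => //; move: cab; rewrite in_itv.
Qed.

Lemma MVT_line_diff f (x1 x2 : V) v {a b : R} : a < b ->
  (forall s, a <= s <= b -> derivable f (x1 + s *: v) v /\ derivable f (x2 + s *: v) v) ->
  exists2 c, a < c < b &
    (f (x1 + b *: v) - f (x2 + b *: v)) - (f (x1 + a *: v) - f (x2 + a *: v))
    = ('D_v f (x1 + c *: v) - 'D_v f (x2 + c *: v)) * (b - a).
Proof.
move=> ab df.
pose g s := f (x1 + s *: v) - f (x2 + s *: v).
have dg c : c \in `]a, b[%R ->
    is_derive c 1 g ('D_v f (x1 + c *: v) - 'D_v f (x2 + c *: v)).
  rewrite in_itv /= => /andP[ac cb].
  have /df[d1 d2] : a <= c <= b by rewrite !ltW.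
  exact: is_deriveB (is_derive_line d1) (is_derive_line d2).
have cg : {within `[a, b], continuous g}.
  apply: derivable_within_continuous => s; rewrite in_itv /= => sab.
  have [d1 d2] := df s sab.
  by apply: derivableB; [case: (is_derive_line d1) | case: (is_derive_line d2)].
have [c cab gE] := MVT ab dg cg.
by exists c; [move: cab; rewrite in_itv | exact: gE].
Qed.

Lemma norm_shift2_lt {x e d} {t dl s u : R} : t * (`|e| + `|d|) < dl ->
  0 <= s <= t -> 0 <= u <= t -> `|x - (x + s *: e + u *: d)| < dl.
Proof.
move=> tdl /andP[s0 st] /andP[u0 ut].
rewrite opprD addrA opprD addrA subrr sub0r -opprD normrN.
apply: le_lt_trans (ler_normD _ _) _; rewrite !normrZ (ger0_norm s0) (ger0_norm u0).
by apply: le_lt_trans tdl; rewrite mulrDr lerD // ler_wpM2r.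
Qed.

Lemma second_difference_mixed_derive f x e d {dl t : R} : 0 < t ->
  t * (`|e| + `|d|) < dl ->
  (forall y, `|x - y| < dl -> derivable f y e /\ derivable ('D_e f) y d) ->
  exists2 y, `|x - y| < dl &
    f (x + t *: e + t *: d) - f (x + t *: e) - f (x + t *: d) + f x
    = t ^+ 2 * 'D_d ('D_e f) y.
Proof.
move=> t0 tdl df.
have t_in : 0 <= t <= t by rewrite lexx ltW.
have O_in : 0 <= (0 : R) <= t by rewrite lexx ltW.
have df' s u : 0 <= s <= t -> 0 <= u <= t ->
    derivable f (x + s *: e + u *: d) e /\
    derivable ('D_e f) (x + s *: e + u *: d) d.
  by move=> s_in u_in; apply: df; exact: norm_shift2_lt tdl s_in u_in.
have [s /andP[s0 st] Es] : exists2 s, 0 < s < t &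
    (f (x + t *: d + t *: e) - f (x + t *: e))
      - (f (x + t *: d + 0 *: e) - f (x + 0 *: e))
    = ('D_e f (x + t *: d + s *: e) - 'D_e f (x + s *: e)) * (t - 0).
  apply: (MVT_line_diff f (x + t *: d) x e t0) => s s_in; split.
    by rewrite addrAC; exact: (df' s t s_in t_in).1.
  by rewrite -[x + s *: e]addr0 -(scale0r d); exact: (df' s 0 s_in O_in).1.
have s_in : 0 <= s <= t by rewrite !ltW.
have [u /andP[u0 ut] Eu] : exists2 u, 0 < u < t &
    'D_e f (x + s *: e + t *: d) - 'D_e f (x + s *: e + 0 *: d)
    = 'D_d ('D_e f) (x + s *: e + u *: d) * (t - 0).
  by apply: (MVT_line ('D_e f) (x + s *: e) d t0) => u u_in; case: (df' s u s_in u_in).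
exists (x + s *: e + u *: d); first by apply: (norm_shift2_lt tdl); rewrite ?ltW.
move: Es Eu; rewrite !scale0r !addr0 !subr0 [x + t *: d + s *: e]addrAC.
rewrite [x + t *: d + t *: e]addrAC => Es Eu.
rewrite Eu -mulrA -expr2 mulrC in Es; rewrite -Es.
by rewrite opprB addrA addrAC.
Qed.

Lemma mixed_derives_meet f x e d {dl : R} : 0 < dl ->
  (forall y, `|x - y| < dl -> [/\ derivable f y e, derivable f y d,
     derivable ('D_e f) y d & derivable ('D_d f) y e]) ->
  exists y1 y2, [/\ `|x - y1| < dl, `|x - y2| < dl &
    'D_d ('D_e f) y1 = 'D_e ('D_d f) y2].
Proof.
move=> dl0 df; pose c := `|e| + `|d| + 1; pose t := dl / c.
have c0 : 0 < c by rewrite ltr_wpDl // addr_ge0.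
have t0 : 0 < t by rewrite divr_gt0.
have t_small (p q : V) : `|p| + `|q| < c -> t * (`|p| + `|q|) < dl.
  by move=> pq; rewrite -[ltRHS](divfK (lt0r_neq0 c0)) ltr_pM2l.
have c_ed : `|e| + `|d| < c by rewrite ltrDl.
have c_de : `|d| + `|e| < c by rewrite addrC ltrDl.
have [y1 y1x E1] := second_difference_mixed_derive f x e d t0 (t_small _ _ c_ed)
  (fun y xy => let: And4 h _ h' _ := df y xy in conj h h').
have [y2 y2x E2] := second_difference_mixed_derive f x d e t0 (t_small _ _ c_de)
  (fun y xy => let: And4 _ h _ h' := df y xy in conj h h').
have t2 : t ^+ 2 != 0 by rewrite expf_neq0 // lt0r_neq0.
(* The second difference is symmetric in e and d. *)
exists y1, y2; split; [exact: y1x | exact: y2x | apply: (mulfI t2)].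
by rewrite -[LHS]E1 -[RHS]E2 [x + t *: d + _]addrAC -!addrA [- f _ + _]addrCA.
Qed.

Lemma derive_mixed_sym f x e d :
  (\forall y \near x, [/\ derivable f y e, derivable f y d,
     derivable ('D_e f) y d & derivable ('D_d f) y e]) ->
  {for x, continuous ('D_d ('D_e f))} -> {for x, continuous ('D_e ('D_d f))} ->
  'D_d ('D_e f) x = 'D_e ('D_d f) x.
Proof.
move=> df c_ed c_de.
suff close eps : 0 < eps -> `|'D_d ('D_e f) x - 'D_e ('D_d f) x| < eps + eps.
  apply/eqP; rewrite -subr_eq0 -normr_le0; apply/ler_addgt0Pr => eps eps0.
  by rewrite add0r (splitr eps) ltW // close // divr_gt0.
move=> eps0.
have near_ed : \forall y \near x, `|'D_d ('D_e f) x - 'D_d ('D_e f) y| < eps.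
  by move/cvgrPdist_lt: c_ed; apply.
have near_de : \forall y \near x, `|'D_e ('D_d f) x - 'D_e ('D_d f) y| < eps.
  by move/cvgrPdist_lt: c_de; apply.
have near3 := filterS3 (nbhs_filter x) (fun y a b c => And3 a b c) df near_ed near_de.
move/nbhs_ballP: near3 => [dl /= dl0 near_x].
have ball_x y : `|x - y| < dl -> ball x dl y by rewrite -ball_normE.
have [y1 [y2 [/ball_x/near_x[_ y1_close _] /ball_x/near_x[_ _ y2_close] y12]]] :=
  mixed_derives_meet f x e d dl0 (fun y xy => let: And3 dfy _ _ := near_x y (ball_x y xy) in dfy).
have -> : 'D_d ('D_e f) x - 'D_e ('D_d f) x
    = ('D_d ('D_e f) x - 'D_d ('D_e f) y1) - ('D_e ('D_d f) x - 'D_e ('D_d f) y2).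
  by rewrite y12 opprB addrA subrK.
exact: le_lt_trans (ler_normB _ _) (ltrD y1_close y2_close).
Qed.

End MixedDerivatives.

Lemma near_eq_continuous {T U : topologicalType} (f g : T -> U) (z : T) :
  (\forall w \near z, f w = g w) -> {for z, continuous f} -> {for z, continuous g}.
Proof.
move=> fg cf; have gf : g @ z --> f z := cvg_trans (near_eq_cvg fg) cf.
by rewrite (nbhs_singleton fg) in gf; exact: gf.
Qed.

Section Jets.
Context {R : realType} {N : nat}.
Implicit Types (Omega : set 'rV[R]_N) (phi : 'rV[R]_N -> R) (u : 'rV[R]_N -> \bar R).
Implicit Types (F : 'rV[R]_N -> R -> 'M[R]_N -> R) (Phi Theta : 'rV[R]_N -> set (R * 'M[R]_N)).

Lemma hessian_sym phi x0 : C2_near phi x0 -> symmetric_mx (hessian phi x0).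
Proof.
case=> U [Uo Ux0 HU]; apply/matrixP => i j; rewrite !mxE.
have [_ _ _ _ c2] := HU x0 Ux0.
apply: derive_mixed_sym (c2 i j) (c2 j i).
apply: filterS (open_nbhs_nbhs (conj Uo Ux0)) => y /HU[_ d1 _ d2 _].
by split; [exact: d1 | exact: d1 | exact: d2 | exact: d2].
Qed.

Lemma C2_near_opp {phi x0} : C2_near phi x0 ->
  C2_near (fun y => - phi y) x0 /\ hessian (fun y => - phi y) x0 = - hessian phi x0.
Proof.
case=> U [Uo Ux0 HU].
have nearU z : U z -> \forall w \near z, U w by move=> Uz; apply: open_nbhs_nbhs.
have partialN k z : U z -> partial k (fun y => - phi y) z = - partial k phi z.
  by move=> /HU[_ d1 _ _ _]; exact: deriveN (d1 k).
have partialN_near k z : U z ->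
    \forall w \near z, - partial k phi w = partial k (fun y => - phi y) w.
  by move=> Uz; apply: filterS (nearU z Uz) => w /partialN->.
have partial2N k l z : U z ->
    partial l (partial k (fun y => - phi y)) z = - partial l (partial k phi) z.
  move=> Uz; have [_ _ _ d2 _] := HU z Uz.
  by rewrite /partial -(near_eq_derive _ (partialN_near k z Uz)); exact: deriveN (d2 k l).
have partial2N_near k l z : U z -> \forall w \near z,
    - partial l (partial k phi) w = partial l (partial k (fun y => - phi y)) w.
  by move=> Uz; apply: filterS (nearU z Uz) => w /partial2N->.
split; last by apply/matrixP => k l; rewrite !mxE partial2N.
exists U; split; [exact: Uo | exact: Ux0 | move=> z Uz].
have [c0 d1 c1 d2 c2] := HU z Uz; split.
- exact: cvgN c0.
- by move=> k; exact: derivableN (d1 k).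
- by move=> k; apply: near_eq_continuous (partialN_near k z Uz) (cvgN (c1 k)).
- by move=> k l; apply: near_eq_derivable (partialN_near k z Uz) (derivableN (d2 k l)).
- by move=> k l; apply: near_eq_continuous (partial2N_near k l z Uz) (cvgN (c2 k l)).
Qed.

Lemma jet_plusN u x0 p :
  jet_plus (fun x => - u x)%E x0 p -> jet_minus u x0 (- p.1, - p.2).
Proof.
case=> phi [phiC2 phi_ge ux0 ->] /=; have [phiNC2 hessN] := C2_near_opp phiC2.
exists (fun y => - phi y); split; [exact: phiNC2 | | | by rewrite hessN].
- by apply: filterS phi_ge => y; rewrite EFinN leeNl.
- by rewrite EFinN -ux0 oppeK.
Qed.

Lemma jet_minusN u x0 p :
  jet_minus u x0 p -> jet_plus (fun x => - u x)%E x0 (- p.1, - p.2).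
Proof.
case=> phi [phiC2 phi_le ux0 ->] /=; have [phiNC2 hessN] := C2_near_opp phiC2.
exists (fun y => - phi y); split; [exact: phiNC2 | | | by rewrite hessN].
- by apply: filterS phi_le => y; rewrite EFinN leeNr oppeK.
- by rewrite EFinN -ux0.
Qed.

Lemma jet_close_le (p q : R * 'M[R]_N) (e e' : R) :
  e <= e' -> jet_close p q e -> jet_close p q e'.
Proof. by move=> le_ee' [close1 close2]; split=> [|i j]; apply: lt_le_trans le_ee'. Qed.

Lemma jet_interiorS {S T : set (R * 'M[R]_N)} :
  S `<=` T -> jet_interior S `<=` jet_interior T.
Proof.
move=> ST p [symp [e e0 pS]]; split => //.
by exists e => // q symq pq; apply/ST/pS.
Qed.

Lemma F_continuous_gt0_near {Omega F x0 r A} :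
  F_continuous Omega F -> Omega x0 -> symmetric_mx A -> 0 < F x0 r A ->
  exists2 e, 0 < e &
    forall q, symmetric_mx q.2 -> jet_close (r, A) q e -> 0 < F x0 q.1 q.2.
Proof.
move=> Fc Ox0 symA F_gt0.
pose G (p : 'rV[R]_N * R * 'M[R]_N) := F p.1.1 p.1.2 p.2.
have /cvgrPdist_lt/(_ _ F_gt0) : G @ within
    [set p | Omega p.1.1 /\ symmetric_mx p.2] (nbhs (x0, r, A)) --> G (x0, r, A).
  by move/subspace_continuousP: Fc; apply.
move=> /nbhs_ballP[e /= e0 near_p0]; exists e => // -[r' A'] /= symA' [close_r close_A].
have : ball (x0, r, A) e (x0, r', A').
  by split; [split; [exact: ballxx | rewrite -ball_normE] | split=> // i j; rewrite -ball_normE].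
move=> /near_p0 /(_ (conj Ox0 symA')) /(le_lt_trans (ler_norm _)).
by rewrite /G /= ltrBlDr ltrDl.
Qed.

Lemma jet_interior_Theta_of {Omega F Phi x0 p} :
  F_continuous Omega F -> Omega x0 ->
  jet_interior (Phi x0) p -> 0 < F x0 p.1 p.2 -> jet_interior (Theta_of F Phi x0) p.
Proof.
case: p => r A Fc Ox0 [/= symA [e1 e1_gt0 near_Phi]] /= F_gt0.
have [e2 e2_gt0 near_F_gt0] := F_continuous_gt0_near Fc Ox0 symA F_gt0.
split => //; exists (Num.min e1 e2); first by rewrite lt_min e1_gt0.
move=> q symq close_q; split; [apply: near_Phi | apply/ltW/near_F_gt0] => //.
  by apply: jet_close_le close_q; rewrite ge_min lexx.
by apply: jet_close_le close_q; rewrite ge_min lexx orbT.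
Qed.

Lemma adm_subsolution_iff_subharmonic Omega F Phi u :
  adm_subsolution Omega F Phi u <-> subharmonic Omega (Theta_of F Phi) u.
Proof.
split=> [sub x0 Ox0 [r A] /(sub x0 Ox0)[] | sub x0 Ox0 r A /(sub x0 Ox0)[]];
  by split.
Qed.

Lemma adm_supersolution_iff_superharmonic Omega F Phi u :
  F_continuous Omega F ->
  (forall x r A, Omega x -> jet_interior (Theta_of F Phi x) (r, A) -> 0 < F x r A) ->
  adm_supersolution Omega F Phi u <-> superharmonic Omega (Theta_of F Phi) u.
Proof.
move=> Fc Fpos; split.
- move=> super x0 Ox0 [r A] jet_rA; split.
    by case: jet_rA => phi [phiC2 _ _ [_ ->]]; exact: hessian_sym.
  move=> int_Theta; have F_gt0 := Fpos x0 r A Ox0 int_Theta.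
  case: (super x0 Ox0 r A jet_rA) => [F_le0 | not_int_Phi].
    by rewrite leNgt F_gt0 in F_le0.
  by apply: not_int_Phi; apply: (jet_interiorS _ _ int_Theta) => p [].
- move=> super x0 Ox0 r A jet_rA; have [_ not_int_Theta] := super x0 Ox0 (r, A) jet_rA.
  have [F_le0 | F_gt0] := lerP (F x0 r A) 0; [by left | right => int_Phi].
  exact/not_int_Theta/(jet_interior_Theta_of Fc Ox0 int_Phi F_gt0).
Qed.

Lemma superharmonic_iff_dual_subharmonic Omega Theta u :
  superharmonic Omega Theta u <-> subharmonic Omega (dual_map Theta) (fun x => - u x)%E.
Proof.
split=> [super x0 Ox0 p /jet_plusN /(super x0 Ox0)[] | sub x0 Ox0 [r A]].
  by split.
by move=> /jet_minusN /(sub x0 Ox0) []; rewrite /= !opprK; split.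
Qed.

End Jets.

Theorem theorem6p5 (R : realType) (N : nat) (Omega : set 'rV[R]_N)
    (F : 'rV[R]_N -> R -> 'M[R]_N -> R) (Phi : 'rV[R]_N -> set (R * 'M[R]_N)) :
  open Omega -> bounded_set Omega -> connected Omega ->
  F_continuous Omega F ->
  (forall x, Omega x -> exists (r : R) (A : 'M[R]_N), symmetric_mx A /\ F x r A = 0) ->
  proper_elliptic Omega Phi ->
  (forall x r A s P, Omega x -> Phi x (r, A) -> s <= 0 -> psd P ->
     F x r A <= F x (r + s) (A + P)) ->
  proper_elliptic Omega (Theta_of F Phi) ->
  (forall u : 'rV[R]_N -> \bar R, usc_on Omega u ->
     (adm_subsolution Omega F Phi u <-> subharmonic Omega (Theta_of F Phi) u))
  /\
  ((forall x r A, Omega x -> jet_interior (Theta_of F Phi x) (r, A) -> 0 < F x r A) ->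
   forall u : 'rV[R]_N -> \bar R, lsc_on Omega u ->
     (adm_supersolution Omega F Phi u <-> superharmonic Omega (Theta_of F Phi) u)
     /\ (superharmonic Omega (Theta_of F Phi) u <->
         subharmonic Omega (dual_map (Theta_of F Phi)) (fun x => (- u x)%E))).
Proof.
move=> _ _ _ Fc _ _ _ _; split=> [u _ | Fpos u _].
  exact: adm_subsolution_iff_subharmonic.
split; first exact: adm_supersolution_iff_superharmonic.
exact: superharmonic_iff_dual_subharmonic.
Qed.
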